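(* Let $\mathsf{P}:\mathcal{B}(\mathbb{C})\to\mathcal{L}(\mathcal{H})$ be a phase shift covariant phase space observable whose angle margin is the canonical phase, i.e.\ $\mathsf{P}(\mathbb{R}_+\times\Theta)=\mathsf{E}_{\mathrm{can}}(\Theta)$ for all $\Theta\in\mathcal{B}([0,2\pi))$. Then its radial margin is trivial: there is a probability measure $\nu$ on $\mathbb{R}_+$ with $\mathsf{P}(X\times[0,2\pi))=\nu(X)I$ for all $X\in\mathcal{B}(\mathbb{R}_+)$.
   Context: $\mathcal{H}\simeq L^2(\mathbb{R})$ with number basis $\{|n\rangle\}$ and number operator $N$. $\mathbb{C}\simeq\mathbb{R}_+\times[0,2\pi)$ via polar coordinates, $X\times\Theta=\{re^{i\theta}:r\in X,\theta\in\Theta\}$; $\dot{+}$ is addition modulo $2\pi$. A phase shift covariant phase space observable is a POVM $\mathsf{P}$ on $\mathcal{B}(\mathbb{C})$ with $e^{i\theta N}\mathsf{P}(X\times\Theta)e^{-i\theta N}=\mathsf{P}(X\times(\Theta\dot{+}\theta))$ for all $X,\Theta,\theta$. The canonical phase is $\mathsf{E}_{\mathrm{can}}(\Theta)=\sum_{m,n=0}^\infty\frac{1}{2\pi}\int_\Theta e^{i(m-n)\theta}d\theta\,|m\rangle\langle n|$. *)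

From HB Require Import structures.
From mathcomp Require Import all_boot all_order all_algebra.
From mathcomp Require Import all_classical all_reals all_analysis.
From mathcomp Require complex.
Export complex.ComplexField.
Import numFieldNormedType.Exports.
Set Implicit Arguments. Unset Strict Implicit. Unset Printing Implicit Defensive.
Import Order.TTheory GRing.Theory Num.Theory.
Local Open Scope classical_set_scope.
Local Open Scope ring_scope.

Notation Cplx R := (complex.complex R).

Section Defs.
Variable R : realType.

Definition expi (t : R) : Cplx R := complex.Complex (cos t) (sin t).

(* The complex plane is modelled as R*R (real part, imaginary part) with its
   product (= Borel) sigma-algebra.  X x Theta = { r e^{i theta} }. *)
Definition polar_set (X Th : set R) : set (R * R) :=
  [set z | exists r t, X r /\ Th t /\ z = (r * cos t, r * sin t)].

Definition Rplus : set R := `[0, +oo[%classic.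
Definition Angles : set R := `[0, 2 * pi[%classic.

Definition addmod2pi (s t : R) : R :=
  (s + t) - 2 * pi * (Num.floor ((s + t) / (2 * pi)))%:~R.

Definition shift_angles (Th : set R) (t : R) : set R :=
  [set addmod2pi s t | s in Th].

(* An operator on H = L^2(R) is represented by its matrix
   <m| A |n> in the number basis {|n>}. *)
Definition opmat := nat -> nat -> Cplx R.

Definition cR (x : R) : Cplx R := complex.Complex x 0.

(* <x| A |x> for the finitely supported vector x = sum_{n<N} x n |n> *)
Definition cconj (z : Cplx R) : Cplx R :=
  complex.Complex (complex.Re z) (- complex.Im z).

Definition qform (A : opmat) (N : nat) (x : nat -> Cplx R) : Cplx R :=
  \sum_(m < N) \sum_(n < N) cconj (x m) * A m n * x n.

(* POVM on the Borel sets of C, given by matrix elements: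
   positivity, normalization P(C) = I, and (weak) sigma-additivity. *)
Definition is_POVM (P : set (R * R) -> opmat) : Prop :=
  [/\ (forall A, measurable A -> forall N x,
         complex.Im (qform (P A) N x) = 0 /\ 0 <= complex.Re (qform (P A) N x)),
      (forall m n, P setT m n = ((m == n)%:R : Cplx R)) &
      (forall F : nat -> set (R * R), (forall k, measurable (F k)) ->
         trivIset setT F -> forall m n,
         ((fun K : nat => \sum_(k < K) complex.Re (P (F k) m n)) @ \oo -->
            (complex.Re (P (\bigcup_k F k) m n) : R)) /\
         ((fun K : nat => \sum_(k < K) complex.Im (P (F k) m n)) @ \oo -->
            (complex.Im (P (\bigcup_k F k) m n) : R)))].

(* e^{i theta N} P(X x Th) e^{-i theta N} = P(X x (Th +. theta)) *)
Definition phase_covariant (P : set (R * R) -> opmat) : Prop :=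
  forall X Th, measurable X -> X `<=` Rplus -> measurable Th -> Th `<=` Angles ->
  forall (t : R) (m n : nat),
    expi (t * m%:R) * P (polar_set X Th) m n * expi (- (t * n%:R))
    = P (polar_set X (shift_angles Th t)) m n.

(* canonical phase: <m|E_can(Th)|n> = (1/2pi) int_Th e^{i(m-n)t} dt *)
Definition Ecan (Th : set R) : opmat := fun m n =>
  complex.Complex
    ((2 * pi)^-1 * Rintegral lebesgue_measure Th
                     (fun t => cos ((m%:R - n%:R) * t)))
    ((2 * pi)^-1 * Rintegral lebesgue_measure Th
                     (fun t => sin ((m%:R - n%:R) * t))).

End Defs.

Arguments Angles R : clear implicits.
Arguments Rplus R : clear implicits.

(* By phase covariance, [P(X x [0, 2 pi))] is diagonal: rotating by [pi / (m - n)]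
   flips the sign of its [(m, n)] entry.  To see that the diagonal is constant, cut
   [[0, 2 pi)] into [k] arcs of length [alpha = 2 pi / k].  Covariance makes the diagonal
   of [P(Z x arc)] equal to [1/k] times that of [P(Z x [0, 2 pi))].  The sectors
   [Z x arc] and [Z^c x arc], together with the origin (which carries no weight), fill
   [R+ x arc], where the canonical phase has diagonal entries [alpha / 2 pi] and
   [(m, m+1)] entries at least [alpha cos alpha / 2 pi].  Cauchy-Schwarz on the two
   positive 2x2 blocks bounds the difference of consecutive diagonal entries [a_m] of
   [P(Z x [0, 2 pi))] by [(a_m - a_(m+1))^2 <= 4 sin^2 alpha], and [k -> oo] gives
   [a_m = a_(m+1)].  The radial margin is [nu(X) = a_0] for [Z = X \ {0}]. *)

From HB Require Import structures.
From mathcomp Require Import all_boot all_order all_algebra.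
From mathcomp Require Import all_classical all_reals all_analysis.
From mathcomp Require complex.
From mathcomp Require Import ring lra zify measurable_realfun.
Import Order.TTheory GRing.Theory Num.Theory.
Import numFieldNormedType.Exports.
Local Open Scope classical_set_scope.
Local Open Scope ring_scope.
Set Implicit Arguments. Unset Strict Implicit. Unset Printing Implicit Defensive.

Section ComplexParts.
Variable R : realType.
Local Notation Re := (@complex.Re R).
Local Notation Im := (@complex.Im R).

Lemma complex_ext (x y : Cplx R) : Re x = Re y -> Im x = Im y -> x = y.
Proof. by case: x => a b; case: y => c d /= -> ->. Qed.

Lemma ReD (x y : Cplx R) : Re (x + y) = Re x + Re y.
Proof. by case: x => a b; case: y => c d. Qed.

Lemma ImD (x y : Cplx R) : Im (x + y) = Im x + Im y.
Proof. by case: x => a b; case: y => c d. Qed.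

Lemma Re_sum I (r : seq I) (Q : pred I) (F : I -> Cplx R) :
  Re (\sum_(i <- r | Q i) F i) = \sum_(i <- r | Q i) Re (F i).
Proof. exact: (big_morph _ ReD). Qed.

Lemma Im_sum I (r : seq I) (Q : pred I) (F : I -> Cplx R) :
  Im (\sum_(i <- r | Q i) F i) = \sum_(i <- r | Q i) Im (F i).
Proof. exact: (big_morph _ ImD). Qed.

Lemma ReMn (x : Cplx R) n : Re (x *+ n) = Re x *+ n.
Proof. by elim: n => [|n IH] //; rewrite !mulrS ReD IH. Qed.

Lemma expiD (a b : R) : expi a * expi b = expi (a + b).
Proof. by apply: complex_ext; rewrite /expi /= ?cosD ?sinD; ring. Qed.

Lemma expi0 : expi 0 = 1 :> Cplx R.
Proof. by apply: complex_ext; rewrite /expi /= ?cos0 ?sin0. Qed.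

Lemma expi_pi : expi pi = - 1 :> Cplx R.
Proof. by apply: complex_ext; rewrite /expi /= ?cospi ?sinpi ?oppr0. Qed.

Lemma expi_conj_diag (a : R) (w : Cplx R) : expi a * w * expi (- a) = w.
Proof. by rewrite mulrC mulrA expiD addNr expi0 mul1r. Qed.

End ComplexParts.

Section Limits.
Variable R : realType.

Lemma cvg_eventually_cst (u : nat -> R) (c l : R) N :
  (forall n, (N <= n)%N -> u n = c) -> u @ \oo --> l -> l = c.
Proof.
move=> uc ul; have uc' : u @ \oo --> c.
  apply: cvg_near_cst; near=> n; apply: uc; near: n; exact: nbhs_infty_ge.
exact: (cvg_unique (@Rhausdorff R) ul uc').
Unshelve. all: end_near.
Qed.

(* [c *+ K] and [c *+ K.+1] have the same limit, and differ by [c]. *)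
Lemma cvg_natmul_eq0 (c l : R) : (fun K : nat => c *+ K) @ \oo --> l -> c = 0.
Proof.
move=> cl; have cSl : (fun K : nat => c *+ K.+1) @ \oo --> l.
  by rewrite (cvg_shiftS (fun K => c *+ K)).
have : (fun K : nat => c *+ K.+1 - c *+ K) @ \oo --> l - l := cvgB cSl cl.
rewrite subrr (_ : (fun K : nat => _) = fun=> c); last first.
  by apply/funext => K; rewrite mulrS addrK.
by move=> c0; exact: (cvg_unique (@Rhausdorff R) (cvg_cst c) (c0 _)).
Qed.

Lemma natmul_bounded_eq0 (x C : R) k0 :
  0 <= x -> (forall k, (k0 <= k)%N -> x * k%:R <= C) -> x = 0.
Proof.
move=> x0 xC; apply/eqP; rewrite eq_le x0 andbT; apply/negP => /negP; rewrite -ltNge => xp.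
have C0 : 0 <= C by apply: le_trans (xC k0 (leqnn _)); rewrite mulr_ge0.
pose k := maxn k0 (Num.bound (C / x)).
have Ck : C / x < k%:R.
  by apply: (lt_le_trans (archi_boundP (divr_ge0 C0 x0))); rewrite ler_nat leq_maxr.
have := xC k (leq_maxl _ _).
by move: Ck; rewrite ltr_pdivrMr // mulrC => /lt_geF ->.
Qed.

End Limits.

Section PositiveMatrix.
Variable R : realType.
Local Notation Re := (@complex.Re R).
Local Notation Im := (@complex.Im R).

Definition psd (M : opmat R) := forall N x,
  Im (qform M N x) = 0 /\ 0 <= Re (qform M N x).

Lemma sum_pair_indicator N m n (g : nat -> R) a b : (m < N)%N -> (n < N)%N ->
  \sum_(i < N) (a * ((i : nat) == m)%:R + b * ((i : nat) == n)%:R) * g i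
  = a * g m + b * g n.
Proof.
have sum1 k : (k < N)%N -> \sum_(i < N) ((i : nat) == k)%:R * g i = g k.
  move=> kN; rewrite (bigD1 (Ordinal kN)) //= eqxx mul1r big1 ?addr0 //.
  by move=> i /negPf ik; rewrite -val_eqE /= in ik; rewrite ik mul0r.
move=> mN nN; rewrite -(sum1 m mN) -(sum1 n nN) !mulr_sumr -big_split /=.
by apply: eq_bigr => i _; ring.
Qed.

Lemma qform_pair (M : opmat R) N m n a b : (m < N)%N -> (n < N)%N ->
  let x i := cR (a * (i == m)%:R + b * (i == n)%:R) in
  Re (qform M N x) = a * (a * Re (M m m) + b * Re (M m n))
                     + b * (a * Re (M n m) + b * Re (M n n)) /\
  Im (qform M N x) = a * (a * Im (M m m) + b * Im (M m n))
                     + b * (a * Im (M n m) + b * Im (M n n)).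
Proof.
move=> mN nN x; set u := fun i : nat => a * (i == m)%:R + b * (i == n)%:R.
have reduce (f : nat -> nat -> R) : \sum_(i < N) u i * \sum_(j < N) u j * f i j
    = a * (a * f m m + b * f m n) + b * (a * f n m + b * f n n).
  rewrite (eq_bigr (fun i : 'I_N => u i * (a * f i m + b * f i n))) => [|i _].
    exact: (sum_pair_indicator (fun i => a * f i m + b * f i n)).
  by rewrite (sum_pair_indicator (f i)).
rewrite /qform Re_sum Im_sum -(reduce (fun i j => Re (M i j))) -(reduce (fun i j => Im (M i j))).
split; apply: eq_bigr => i _; rewrite ?Re_sum ?Im_sum mulr_sumr;
  apply: eq_bigr => j _; rewrite /u /x /cconj /cR; case: (M i j) => v w /=; ring.
Qed.

Lemma psd_diag M m : psd M -> Im (M m m) = 0 /\ 0 <= Re (M m m).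
Proof.
move=> HM; have := HM m.+1 (fun i => cR (1 * (i == m)%:R + 0 * (i == m)%:R)).
have [-> ->] := qform_pair M 1 0 (ltnSn m) (ltnSn m).
by rewrite !mul0r !addr0 !mul1r.
Qed.

Definition resym (M : opmat R) m n := (Re (M m n) + Re (M n m)) / 2.

Lemma binary_form_ge0 (p q h : R) :
  (forall a b, 0 <= a * (a * p + b * h) + b * (a * h + b * q)) -> h ^+ 2 <= p * q.
Proof.
move=> Hf; have K1 := Hf (- h) p; have K2 := Hf q (- h); have K3 := Hf 1 (- h).
have p0 : 0 <= p by have := Hf 1 0; lra.
have q0 : 0 <= q by have := Hf 0 1; lra.
have K1' : 0 <= p * (p * q - h ^+ 2) by nra.
have K2' : 0 <= q * (p * q - h ^+ 2) by nra.
have [pp|] := ltP 0 p; first by rewrite -subr_ge0 -(pmulr_rge0 _ pp).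
rewrite le_eqVlt ltNge p0 orbF => /eqP p0'.
have [qq|] := ltP 0 q; first by rewrite -subr_ge0 -(pmulr_rge0 _ qq).
rewrite le_eqVlt ltNge q0 orbF => /eqP q0'.
rewrite p0' q0' in K3 *; nra.
Qed.

Lemma psd_cauchy_schwarz M m n : psd M ->
  resym M m n ^+ 2 <= Re (M m m) * Re (M n n).
Proof.
move=> HM; apply: binary_form_ge0 => a b.
have mN : (m < (maxn m n).+1)%N by rewrite ltnS leq_maxl.
have nN : (n < (maxn m n).+1)%N by rewrite ltnS leq_maxr.
have [_] := HM (maxn m n).+1 (fun i => cR (a * (i == m)%:R + b * (i == n)%:R)).
have [-> _] := qform_pair M a b mN nN.
rewrite /resym; set hm := Re (M m n); set hn := Re (M n m); lra.
Qed.

End PositiveMatrix.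

Section Povm.
Variable R : realType.
Variable P : set (R * R) -> opmat R.
Hypothesis HP : is_POVM P.

Lemma povm_psd A : measurable A -> psd (P A).
Proof. by case: HP => H _ _; exact: H. Qed.

Lemma povm_set0 m n : P set0 m n = 0.
Proof.
case: HP => _ _ /(_ (fun=> set0) (fun=> measurable0) (@trivIset_set0 _ _ setT) m n).
rewrite bigcup0 // => -[ReP ImP].
by apply: complex_ext; apply: cvg_natmul_eq0;
  [apply: cvg_trans ReP | apply: cvg_trans ImP];
  apply: near_eq_cvg; near=> K; rewrite sumr_const card_ord.
Unshelve. all: end_near.
Qed.

Lemma povm_setU A B m n : measurable A -> measurable B -> A `&` B = set0 ->
  P (A `|` B) m n = P A m n + P B m n.
Proof.
move=> mA mB AB0.
pose F (k : nat) := if k == 0%N then A else if k == 1%N then B else set0.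
have mF k : measurable (F k) by rewrite /F; case: ifP => _ //; case: ifP.
have tF : trivIset setT F.
  move=> i j _ _ [x [Fix Fjx]].
  move: i j Fix Fjx => [|[|i]] [|[|j]] //= Fix Fjx; try by case: Fix; try by case: Fjx.
  - by have : (A `&` B) x by []; rewrite AB0.
  - by have : (A `&` B) x by []; rewrite AB0.
have UF : \bigcup_k F k = A `|` B.
  apply/seteqP; split => x.
    by case=> k _; rewrite /F; case: ifP => _; [left|case: ifP => _; [right|]].
  by case=> Hx; [exists 0%N | exists 1%N].
have sumF (f : set (R * R) -> R) K : f set0 = 0 -> (2 <= K)%N ->
    \sum_(k < K) f (F k) = f A + f B.
  by case: K => [|[|K]] // f0 _; rewrite 2!big_ord_recl /= big1 ?addr0.
case: HP => _ _ /(_ F mF tF m n); rewrite UF => -[ReP ImP].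
apply: complex_ext; rewrite ?ReD ?ImD.
  apply: (cvg_eventually_cst (N := 2%N)) ReP => K K2.
  by rewrite (sumF (fun S => complex.Re (P S m n))) // povm_set0.
apply: (cvg_eventually_cst (N := 2%N)) ImP => K K2.
by rewrite (sumF (fun S => complex.Im (P S m n))) // povm_set0.
Qed.

Lemma povm_bigsetU (F : nat -> set (R * R)) K m n :
  (forall k, (k < K)%N -> measurable (F k)) ->
  (forall i j, (i < K)%N -> (j < K)%N -> i != j -> F i `&` F j = set0) ->
  P (\big[setU/set0]_(k < K) F k) m n = \sum_(k < K) P (F k) m n.
Proof.
elim: K => [|K IH] mF dF; first by rewrite !big_ord0 povm_set0.
have mF' k : (k < K)%N -> measurable (F k) by move=> kK; apply: mF; exact: ltnW.
rewrite !big_ord_recr /= povm_setU.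
- by rewrite IH // => i j iK jK; apply: dF; exact: ltnW.
- by apply: bigsetU_measurable => k _; exact: mF'.
- exact: mF.
- rewrite -bigcup_mkord setI_bigcupl bigcup0 // => k /= kK.
  by apply: dF => //; [exact: ltnW | rewrite ltn_eqF].
Qed.

End Povm.

Section PolarGeometry.
Variable R : realType.
Local Notation pos := (`]0, +oo[%classic : set R).

Lemma polar_norm (r t : R) : (r * cos t) ^+ 2 + (r * sin t) ^+ 2 = r ^+ 2.
Proof. by rewrite !exprMn -mulrDr cos2Dsin2 mulr1. Qed.

Lemma sin_eq0_itv (u : R) : - pi < u < pi -> sin u = 0 -> u = 0.
Proof.
move=> /andP[u_gt u_lt] su0.
have [u0|u0|//] := ltgtP u 0.
  have : 0 < sin (- u) by apply: sin_gt0_pi; apply/andP; split; lra.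
  by rewrite sinN su0 oppr0 ltxx.
have : 0 < sin u by apply: sin_gt0_pi; apply/andP; split; lra.
by rewrite su0 ltxx.
Qed.

(* [cos (t - t') = 1] forces [sin ((t - t') / 2) = 0]. *)
Lemma angle_eq_cos_sin (t t' : R) : 0 <= t < 2 * pi -> 0 <= t' < 2 * pi ->
  cos t = cos t' -> sin t = sin t' -> t = t'.
Proof.
move=> /andP[t0 t2pi] /andP[t'0 t'2pi] ct st.
have c1 : cos (t - t') = 1 by rewrite cosB -ct -st -!expr2 cos2Dsin2.
set u := (t - t') / 2.
have tu : t - t' = u *+ 2 by rewrite /u -mulr_natr mulfVK.
have su : sin u = 0.
  move: c1; rewrite tu cos_mulr2n cos2sin2 mulr2n => c1.
  by apply/eqP; rewrite -sqrf_eq0; apply/eqP; lra.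
have u0 : u = 0 by apply: sin_eq0_itv su; apply/andP; split; rewrite /u; lra.
by apply/eqP; rewrite -subr_eq0 tu u0 mul0rn.
Qed.

Lemma polar_inj (r r' t t' : R) : 0 < r -> 0 < r' ->
  0 <= t < 2 * pi -> 0 <= t' < 2 * pi ->
  (r * cos t, r * sin t) = (r' * cos t', r' * sin t') -> r = r' /\ t = t'.
Proof.
move=> r0 r'0 t_itv t'_itv [e1 e2].
have rr' : r = r'.
  have := polar_norm r t; rewrite e1 e2 polar_norm => /eqP.
  by rewrite eqf_sqr => /orP[/eqP //|/eqP rN]; lra.
split => //; subst r'.
apply: angle_eq_cos_sin => //; exact: (mulfI (negbT (gt_eqF r0))).
Qed.

Definition rotate (c : R) (z : R * R) : R * R :=
  (z.1 * cos c + z.2 * sin c, - z.1 * sin c + z.2 * cos c).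

Lemma polar_set_translate (Z T : set R) (c : R) :
  polar_set Z [set t + c | t in T] = rotate c @^-1` polar_set Z T.
Proof.
apply/seteqP; split => z /=.
  move=> [r [_ [Zr [[t Tt <-] ->]]]].
  exists r, t; split => //; split => //.
  rewrite /rotate /=; congr (_, _).
    by have := cosB (t + c) c; rewrite addrK => ->; ring.
  by have := sinB (t + c) c; rewrite addrK => ->; ring.
move=> [r [t [Zr [Tt]]]]; rewrite /rotate /= => -[e1 e2].
exists r, (t + c); split => //; split; first by exists t.
have cs := cos2Dsin2 c.
case: z e1 e2 => x y /= e1 e2; congr (_, _).
  rewrite cosD mulrBr !mulrA -e1 -e2.
  by rewrite -[LHS]mulr1 -cs; ring.
rewrite sinD mulrDr !mulrA -e1 -e2.
by rewrite -[LHS]mulr1 -cs; ring.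
Qed.

Lemma polar_sector_eq (Z : set R) (a : R) : Z `<=` pos -> 0 < a < pi / 2 ->
  polar_set Z `[0, a[%classic =
  [set z | 0 < z.1 /\ 0 <= z.2 /\ 0 < z.1 * sin a - z.2 * cos a /\
           Z (Num.sqrt (z.1 ^+ 2 + z.2 ^+ 2))].
Proof.
move=> Zpos /andP[a0 api].
have pi0 := pi_gt0 R.
apply/seteqP; split => z /=.
  move=> [r [t [Zr [Tt ->]]]] /=.
  have r0 : 0 < r by have := Zpos _ Zr; rewrite /= in_itv /= andbT.
  move: Tt; rewrite /= in_itv /= => /andP[t0 ta].
  split; first by rewrite mulr_gt0 // cos_gt0_pihalf //; apply/andP; split; lra.
  split.
    by apply: mulr_ge0; [exact: ltW | apply: sin_ge0_pi; apply/andP; split; lra].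
  split; last by rewrite polar_norm sqrtr_sqr gtr0_norm.
  have : 0 < sin (a - t) by apply: sin_gt0_pi; apply/andP; split; lra.
  rewrite sinB => h.
  have -> : r * cos t * sin a - r * sin t * cos a =
            r * (sin a * cos t - cos a * sin t) by ring.
  by rewrite mulr_gt0.
case: z => x y /= [x0 [y0 [hxy Zr]]].
set r := Num.sqrt (x ^+ 2 + y ^+ 2).
have r0 : 0 < r by rewrite sqrtr_gt0; nra.
have r2 : r ^+ 2 = x ^+ 2 + y ^+ 2 by rewrite sqr_sqrtr //; nra.
have xr : x <= r by have := sqr_ge0 y; nra.
have xr1 : -1 <= x / r <= 1.
  apply/andP; split; last by rewrite ler_pdivrMr // mul1r.
  have : 0 <= x / r by rewrite divr_ge0 // ltW.
  lra.
set t := acos (x / r).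
have ct : cos t = x / r by rewrite /t acosK // in_itv.
have st : sin t = y / r.
  rewrite /t sin_acos //.
  have -> : 1 - (x / r) ^+ 2 = (y / r) ^+ 2 by rewrite !expr_div_n r2; field; nra.
  by rewrite sqrtr_sqr ger0_norm // divr_ge0 // ltW.
have ex : x = r * cos t by rewrite ct mulrC divfK // gt_eqF.
have ey : y = r * sin t by rewrite st mulrC divfK // gt_eqF.
exists r, t; split => //; split; last by rewrite -ex -ey.
rewrite /= in_itv /=; apply/andP; split; first by rewrite acos_ge0.
rewrite ltNge; apply/negP => at_.
have tpi : t <= pi by rewrite acos_lepi.
have : 0 <= sin (t - a) by apply: sin_ge0_pi; apply/andP; split; lra.
rewrite sinB.
have : 0 < r * (sin a * cos t - cos a * sin t).
  by move: hxy; rewrite ex ey; congr (0 < _); ring.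
rewrite pmulr_rgt0 //; lra.
Qed.

Lemma polar_setU (Z : set R) T1 T2 :
  polar_set Z (T1 `|` T2) = polar_set Z T1 `|` polar_set Z T2.
Proof.
apply/seteqP; split => z.
  by move=> [r [t [Zr [[T1t|T2t] ->]]]]; [left|right]; exists r, t.
by move=> [|] [r [t [Zr [Tt ->]]]]; exists r, t; split => //; split => //; [left|right].
Qed.

Lemma polar_set0r (Z : set R) : polar_set Z set0 = set0.
Proof. by apply/seteqP; split => // z [r [t [_ [[]]]]]. Qed.

Lemma polar_set0l (T : set R) : polar_set set0 T = set0.
Proof. by apply/seteqP; split => // z [r [t [[]]]]. Qed.

Lemma polar_set_bigsetU (Z : set R) (T : nat -> set R) K :
  polar_set Z (\big[setU/set0]_(j < K) T j) =
  \big[setU/set0]_(j < K) polar_set Z (T j).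
Proof.
elim: K => [|K IH]; first by rewrite !big_ord0 polar_set0r.
by rewrite !big_ord_recr /= polar_setU IH.
Qed.

Lemma polar_set_bigcupl (F : nat -> set R) (T : set R) :
  polar_set (\bigcup_i F i) T = \bigcup_i polar_set (F i) T.
Proof.
apply/seteqP; split => z.
  by move=> [r [t [[i _ Fr] [Tt ->]]]]; exists i => //; exists r, t.
by move=> [i _ [r [t [Fr [Tt ->]]]]]; exists r, t; split => //; exists i.
Qed.

(* Polar coordinates are injective away from the origin. *)
Lemma polar_set_disj (Z1 Z2 T1 T2 : set R) :
  Z1 `<=` pos -> Z2 `<=` pos -> T1 `<=` Angles R -> T2 `<=` Angles R ->
  Z1 `&` Z2 = set0 \/ T1 `&` T2 = set0 ->
  polar_set Z1 T1 `&` polar_set Z2 T2 = set0.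
Proof.
move=> Z1p Z2p T1A T2A H.
apply/seteqP; split => // z [[r [t [Zr [Tt ->]]]] [r' [t' [Zr' [Tt' e]]]]].
have r0 : 0 < r by have := Z1p _ Zr; rewrite /= in_itv /= andbT.
have r0' : 0 < r' by have := Z2p _ Zr'; rewrite /= in_itv /= andbT.
have t_itv : 0 <= t < 2 * pi by have := T1A _ Tt; rewrite /Angles /= in_itv.
have t'_itv : 0 <= t' < 2 * pi by have := T2A _ Tt'; rewrite /Angles /= in_itv.
have [rr' tt'] := polar_inj r0 r0' t_itv t'_itv e; subst r' t'.
case: H => H; first by have : (Z1 `&` Z2) r by []; rewrite H.
by have : (T1 `&` T2) t by []; rewrite H.
Qed.

Lemma origin_polar_disj (Z T : set R) : Z `<=` pos ->
  [set (0, 0)] `&` polar_set Z T = set0.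
Proof.
move=> Zp; apply/seteqP; split => // z [/= -> [r [t [Zr [_ e]]]]].
have r0 : 0 < r by have := Zp _ Zr; rewrite /= in_itv /= andbT.
have := polar_norm r t; rewrite -[r * cos t](f_equal fst e) -[r * sin t](f_equal snd e) /=.
move=> /esym/eqP; rewrite expr0n /= addr0 sqrf_eq0 => /eqP r00.
by rewrite r00 ltxx in r0.
Qed.

Lemma polar_Rplus_split (Z T : set R) : Z `<=` pos -> T 0 ->
  polar_set (Rplus R) T = [set (0, 0)] `|` (polar_set Z T `|` polar_set (pos `\` Z) T).
Proof.
move=> Zp T0; apply/seteqP; split => z.
  move=> [r [t [Rr [Tt ->]]]].
  have r0 : 0 <= r by move: Rr; rewrite /Rplus /= in_itv /= andbT.
  have [->|rp] := eqVneq r 0; first by left; rewrite !mul0r.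
  have rp' : pos r by rewrite /= in_itv /= andbT lt_def rp r0.
  right; have [Zr|Zr] := pselect (Z r); [left|right]; exists r, t => //.
case=> [/= ->|[|]].
- exists 0, 0; split; first by rewrite /Rplus /= in_itv /= lexx.
  by split => //; rewrite !mul0r.
- move=> [r [t [Zr [Tt ->]]]]; exists r, t; split => //.
  by have := Zp _ Zr; rewrite /Rplus /= !in_itv /= !andbT => /ltW.
- move=> [r [t [[Zr _] [Tt ->]]]]; exists r, t; split => //.
  by move: Zr; rewrite /Rplus /= !in_itv /= !andbT => /ltW.
Qed.

Lemma polar_set_split0 (X T : set R) : X `<=` Rplus R ->
  polar_set X T = polar_set (X `&` [set 0]) T `|` polar_set (X `&` pos) T.
Proof.
move=> XR; apply/seteqP; split => z.
  move=> [r [t [Xr [Tt ->]]]].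
  have r0 : 0 <= r by have := XR _ Xr; rewrite /Rplus /= in_itv /= andbT.
  have [r00|rp] := eqVneq r 0; first by left; exists r, t.
  right; exists r, t; split => //; split => //.
  by rewrite /= in_itv /= andbT lt_def rp r0.
by case=> [[r [t [[Xr _] [Tt ->]]]]|[r [t [[Xr _] [Tt ->]]]]]; exists r, t.
Qed.

Lemma polar_set_origin (X T : set R) :
  polar_set (X `&` [set 0]) T = set0 \/ polar_set (X `&` [set 0]) T = [set (0, 0)].
Proof.
have [[t [Tt X0]]|H] := pselect (exists t, T t /\ X 0); [right|left].
  apply/seteqP; split => z.
    by move=> [r [t' [[_ /= ->] [_ ->]]]]; rewrite !mul0r.
  by move=> /= ->; exists 0, t; split => //; split => //; rewrite !mul0r.
apply/seteqP; split => // z [r [t [[Xr /= r0] [Tt _]]]].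
by apply: H; exists t; split => //; rewrite -r0.
Qed.

End PolarGeometry.

Section Arcs.
Variable R : realType.

Lemma twopi_gt0 : 0 < 2 * pi :> R.
Proof. by rewrite mulr_gt0 // pi_gt0. Qed.

Lemma addmod2pi_itv (s t : R) : 0 <= addmod2pi s t < 2 * pi.
Proof.
rewrite /addmod2pi; set x := (s + t) / (2 * pi).
have := floor_itv x; rewrite intrD => /andP[fl_le fl_gt].
have -> : s + t = 2 * pi * x by rewrite /x mulrC divfK // gt_eqF // twopi_gt0.
have tp := twopi_gt0; apply/andP; split; nra.
Qed.

Lemma addmod2pi_id (s t : R) : 0 <= s + t < 2 * pi -> addmod2pi s t = s + t.
Proof.
move=> /andP[st0 st2pi]; rewrite /addmod2pi.
suff -> : Num.floor ((s + t) / (2 * pi)) = 0 by rewrite mulr0 subr0.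
have tp := twopi_gt0.
apply/eqP; rewrite eq_le floor_le0 floor_ge0 divr_ge0 ?(ltW tp) // andbT.
by rewrite ltr_pdivrMr // mul1r.
Qed.

Lemma mod2pi_uniq (u : R) (N : int) :
  0 <= u < 2 * pi -> 0 <= u - 2 * pi * N%:~R < 2 * pi -> N = 0.
Proof.
move=> /andP[u0 u2pi] /andP[v0 v2pi]; have tp := twopi_gt0.
have N_gt : (-1 : R) < N%:~R by nra.
have N_lt : (N%:~R : R) < 1 by nra.
have : (-1 < N)%R by rewrite -(ltr_int R) (_ : (-1)%:~R = -1 :> R) // mulrN1z.
have : (N < 1)%R by rewrite -(ltr_int R).
lia.
Qed.

(* The preimage of [u] is [u - t] reduced mod [2 pi]; the two floor corrections cancel. *)
Lemma shift_Angles (t : R) : shift_angles (Angles R) t = Angles R.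
Proof.
rewrite /shift_angles /Angles; apply/seteqP; split => u /=.
  by move=> [s _ <-]; rewrite in_itv /= addmod2pi_itv.
rewrite in_itv /= => u_itv.
exists (addmod2pi u (- t)); first by rewrite /= in_itv /= addmod2pi_itv.
have := addmod2pi_itv (addmod2pi u (- t)) t; rewrite /addmod2pi.
set a := Num.floor ((u + - t) / (2 * pi)).
set b := Num.floor ((u + - t - 2 * pi * a%:~R + t) / (2 * pi)).
have -> : u + - t - 2 * pi * a%:~R + t - 2 * pi * b%:~R = u - 2 * pi * (a + b)%:~R.
  by rewrite intrD; ring.
by move=> v_itv; rewrite (mod2pi_uniq u_itv v_itv) mulr0 subr0.
Qed.

Definition arc_len (k : nat) : R := 2 * pi / k%:R.

Definition angle_arc (k j : nat) : set R :=
  `[j%:R * arc_len k, j.+1%:R * arc_len k[%classic.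

Lemma arc_len_gt0 k : (0 < k)%N -> 0 < arc_len k.
Proof. by move=> k0; rewrite divr_gt0 ?twopi_gt0 // ltr0n. Qed.

Lemma natr_arc_len k : (0 < k)%N -> k%:R * arc_len k = 2 * pi.
Proof. by move=> k0; rewrite mulrC divfK // pnatr_eq0 -lt0n. Qed.

Lemma arc_len_ratio k : (0 < k)%N -> arc_len k / (2 * pi) * k%:R = 1.
Proof.
move=> k0; rewrite mulrAC (mulrC (arc_len k)) natr_arc_len //.
by rewrite mulfV // gt_eqF // twopi_gt0.
Qed.

Lemma arc_len_bounds k : (8 <= k)%N -> 0 < arc_len k < pi / 2 /\ arc_len k <= 1.
Proof.
move=> k8; have k0 : (0 < k)%N by apply: leq_trans k8.
have := natr_arc_len k0; have := arc_len_gt0 k0.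
have : 8%:R <= (k%:R : R) by rewrite ler_nat.
have := pihalf_lt2 R; have := pi_gt0 R.
by move=> ? ? ? ? ?; split; [apply/andP; split|]; nra.
Qed.

Lemma arc0 k : angle_arc k 0 = `[0, arc_len k[%classic.
Proof. by rewrite /angle_arc mul0r mul1r. Qed.

Lemma arc_translate k j : angle_arc k j = [set t + j%:R * arc_len k | t in angle_arc k 0].
Proof.
rewrite arc0 /angle_arc; apply/seteqP; split => t /=.
  rewrite in_itv /= => /andP[t_ge t_lt]; exists (t - j%:R * arc_len k); last by rewrite subrK.
  by rewrite /= in_itv /= subr_ge0 t_ge /=; move: t_lt; rewrite -natr1 mulrDl mul1r; lra.
move=> [s]; rewrite /= !in_itv /= => /andP[s_ge s_lt] <-.
by rewrite -natr1 mulrDl mul1r; apply/andP; split; lra.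
Qed.

Lemma arc_sub_Angles k j : (j < k)%N -> angle_arc k j `<=` Angles R.
Proof.
move=> jk t; rewrite /angle_arc /Angles /= !in_itv /= => /andP[t_ge t_lt].
have k0 : (0 < k)%N by apply: leq_ltn_trans jk.
have := arc_len_gt0 k0; have := natr_arc_len k0.
have : j.+1%:R <= (k%:R : R) by rewrite ler_nat.
have : 0 <= (j%:R : R) by [].
move=> j0 jk' ak a0; apply/andP; split; nra.
Qed.

Lemma arc_disj k i j : (0 < k)%N -> i != j -> angle_arc k i `&` angle_arc k j = set0.
Proof.
move=> k0 ij; apply/seteqP; split => // t []; rewrite /angle_arc /= !in_itv /=.
move=> /andP[ti_ge ti_lt] /andP[tj_ge tj_lt]; have := arc_len_gt0 k0.
case: (ltngtP i j) => [lt|lt|e]; last by rewrite e eqxx in ij.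
  have : i.+1%:R <= (j%:R : R) by rewrite ler_nat.
  nra.
have : j.+1%:R <= (i%:R : R) by rewrite ler_nat.
nra.
Qed.

Lemma bigsetU_arc k K : (0 < k)%N ->
  \big[setU/set0]_(j < K) angle_arc k j = `[0, K%:R * arc_len k[%classic.
Proof.
move=> k0; have a0 := arc_len_gt0 k0.
elim: K => [|K IH].
  by rewrite big_ord0 mul0r; apply/seteqP; split => // t /=; rewrite in_itv /=; lra.
rewrite big_ord_recr /= IH /angle_arc; apply/seteqP; split => t /=.
  rewrite !in_itv /= -natr1 mulrDl mul1r.
  have : 0 <= (K%:R : R) by [].
  by move=> K0 [/andP[t_ge t_lt]|/andP[t_ge t_lt]]; apply/andP; split; nra.
rewrite !in_itv /= => /andP[t_ge t_lt].
by have [tK|tK] := ltP t (K%:R * arc_len k); [left|right]; apply/andP; split.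
Qed.

Lemma Angles_bigsetU_arc k : (0 < k)%N -> Angles R = \big[setU/set0]_(j < k) angle_arc k j.
Proof. by move=> k0; rewrite bigsetU_arc // natr_arc_len. Qed.

Lemma shift_arc0 k j : (j < k)%N ->
  shift_angles (angle_arc k 0) (j%:R * arc_len k) = angle_arc k j.
Proof.
move=> jk; rewrite /shift_angles.
have arc_j s : angle_arc k 0 s -> 0 <= s + j%:R * arc_len k < 2 * pi.
  move=> s0; have : Angles R (s + j%:R * arc_len k).
    by apply: (arc_sub_Angles jk); rewrite arc_translate; exists s.
  by rewrite /Angles /= in_itv.
rewrite [RHS]arc_translate; apply/seteqP; split => u /= [s s0 <-]; exists s => //.
  by rewrite addmod2pi_id // arc_j.
by rewrite addmod2pi_id // arc_j.
Qed.

End Arcs.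

Section PolarMeasurability.
Variable R : realType.
Local Notation pos := (`]0, +oo[%classic : set R).

Lemma measurable_preimage d d' (T : measurableType d) (U : measurableType d')
    (g : T -> U) (B : set U) :
  measurable_fun setT g -> measurable B -> measurable (g @^-1` B).
Proof. by move=> mg mB; have := mg measurableT B mB; rewrite setTI. Qed.

Lemma measurable_linear_form (a b : R) :
  measurable_fun setT (fun z : R * R => z.1 * a + z.2 * b).
Proof.
by apply: measurable_funD; apply: measurable_funM;
  [exact: measurable_fst | exact: measurable_cst | exact: measurable_snd | exact: measurable_cst].
Qed.

Lemma measurable_rotate (c : R) : measurable_fun setT (rotate c).
Proof.
apply: measurable_fun_pair; first exact: measurable_linear_form.
rewrite (_ : (fun z : R * R => _) = fun z => z.1 * (- sin c) + z.2 * cos c); last first.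
  by apply/funext => z; rewrite mulrN mulNr.
exact: measurable_linear_form.
Qed.

Lemma measurable_polar_sector (Z : set R) (a : R) : measurable Z -> Z `<=` pos ->
  0 < a < pi / 2 -> measurable (polar_set Z `[0, a[%classic).
Proof.
move=> mZ Zpos a_itv; rewrite (polar_sector_eq Zpos a_itv).
rewrite (_ : [set z | _] = (fun z => z.1 * 1 + z.2 * 0) @^-1` pos `&`
    ((fun z => z.1 * 0 + z.2 * 1) @^-1` `[0, +oo[%classic `&`
    ((fun z => z.1 * sin a + z.2 * (- cos a)) @^-1` pos `&`
     (fun z : R * R => Num.sqrt (z.1 ^+ 2 + z.2 ^+ 2)) @^-1` Z))); last first.
  apply/seteqP; split => z /=; rewrite !in_itv /= !andbT !mulr1 !mulr0 addr0 add0r mulrN;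
    by move=> [? [? [? ?]]]; do !split.
apply: measurableI; first by apply: measurable_preimage;
  [exact: measurable_linear_form | exact: measurable_itv].
apply: measurableI; first by apply: measurable_preimage;
  [exact: measurable_linear_form | exact: measurable_itv].
apply: measurableI; first by apply: measurable_preimage;
  [exact: measurable_linear_form | exact: measurable_itv].
apply: measurable_preimage => //.
apply: measurableT_comp; first exact: continuous_measurable_fun (@sqrt_continuous R).
by apply: measurable_funD; apply: measurable_funX; [exact: measurable_fst | exact: measurable_snd].
Qed.

Lemma measurable_polar_arc (Z : set R) k j : measurable Z -> Z `<=` pos ->
  (8 <= k)%N -> measurable (polar_set Z (@angle_arc R k j)).
Proof.
move=> mZ Zpos /(@arc_len_bounds R)[a_itv _]; rewrite arc_translate polar_set_translate.
apply: (measurable_preimage (measurable_rotate _)).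
by rewrite arc0; exact: measurable_polar_sector.
Qed.

Lemma measurable_origin : measurable [set ((0 : R), (0 : R))].
Proof.
rewrite (_ : [set _] = [set (0 : R)] `*` [set (0 : R)]).
  by apply: measurableX; exact: measurable_set1.
by apply/seteqP; split => -[x y] /=; [case=> -> ->|case=> -> ->].
Qed.

End PolarMeasurability.

Section CanonicalPhase.
Variable R : realType.
Local Notation mu := (@lebesgue_measure R).

Lemma sin_le_id (x : R) : 0 <= x -> sin x <= x.
Proof.
move=> x0; have [c _] := @MVT_segment R sin cos 0 x x0 (fun y _ => is_derive_sin y)
  (continuous_subspaceT (@continuous_sin R)).
by rewrite sin0 !subr0 => ->; have := cos_le1 c; nra.
Qed.

Lemma lebesgue_measure_itv0 (a : R) : 0 < a -> fine (mu `[0, a[%classic) = a.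
Proof. by move=> a0; rewrite lebesgue_measure_itv /= lte_fin a0 /= subr0. Qed.

Lemma integrable_itv0_continuous (f : R -> R) (a : R) : continuous f ->
  mu.-integrable `[0, a[%classic (EFin \o f).
Proof.
move=> cf; apply: (@integrableS _ _ _ mu `[0, a]%classic) => //.
  by move=> t /=; rewrite !in_itv /= => /andP[-> /ltW ->].
apply: continuous_compact_integrable; first exact: segment_compact.
exact: continuous_subspaceT.
Qed.

(* [cos] decreases on [0, pi]. *)
Lemma Rintegral_cos_ge (a : R) : 0 < a <= pi ->
  a * cos a <= Rintegral mu `[0, a[%classic cos.
Proof.
move=> /andP[a0 api].
have := @le_Rintegral _ _ R mu `[0, a[%classic (fun=> cos a) cos (measurable_itv _)
  (integrable_itv0_continuous _ (fun x => cvg_cst _))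
  (integrable_itv0_continuous _ (@continuous_cos R)).
rewrite Rintegral_cst // lebesgue_measure_itv0 // mulrC; apply.
move=> t; rewrite /= in_itv /= => /andP[t0 ta]; apply: ltW.
have tpi : t <= pi by lra.
by have := @ltr_cos R t a; rewrite !in_itv /= t0 tpi (ltW a0) api /= => ->.
Qed.

Lemma Ecan_itv0_diag (a : R) m : 0 < a ->
  complex.Re (Ecan `[0, a[%classic m m) = a / (2 * pi).
Proof.
move=> a0; rewrite /Ecan /= (_ : (fun t : R => _) = fun=> 1).
  by rewrite Rintegral_cst // lebesgue_measure_itv0 // mul1r mulrC.
by apply/funext => t; rewrite subrr mul0r cos0.
Qed.

Lemma Ecan_itv0_resym (a : R) m : 0 < a <= pi ->
  a * cos a / (2 * pi) <= resym (Ecan `[0, a[%classic) m m.+1.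
Proof.
move=> a_itv; rewrite /resym /Ecan /=.
rewrite (_ : (fun t : R => cos ((m%:R - m.+1%:R) * t)) = cos); last first.
  by apply/funext => t; rewrite -natr1 opprD addrA subrr add0r mulN1r cosN.
rewrite (_ : (fun t : R => cos ((m.+1%:R - m%:R) * t)) = cos); last first.
  by apply/funext => t; rewrite -natr1 addrAC subrr add0r mul1r.
have avg (y : R) : (y + y) / 2 = y by field.
rewrite avg [X in _ <= X]mulrC ler_wpM2r ?Rintegral_cos_ge //.
by rewrite invr_ge0 ltW // twopi_gt0.
Qed.

End CanonicalPhase.

(* If [a, b] and [1 - a, 1 - b] are the diagonals of two positive 2x2 blocks whose
   off-diagonal parts sum to at least [c], then [a] and [b] are close. *)
Lemma complementary_blocks_gap (R : realFieldType) (a b H H' c : R) :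
  0 <= a <= 1 -> 0 <= b <= 1 ->
  H ^+ 2 <= a * b -> H' ^+ 2 <= (1 - a) * (1 - b) -> 0 <= c -> c <= H + H' ->
  (a - b) ^+ 2 <= 4 * (1 - c ^+ 2).
Proof.
move=> /andP[a0 a1] /andP[b0 b1] HH HH' c0 cH.
set u := a * (1 - b); set v := b * (1 - a); set W := H * H'.
have u0 : 0 <= u by rewrite mulr_ge0 // subr_ge0.
have v0 : 0 <= v by rewrite mulr_ge0 // subr_ge0.
have u1 : u <= 1 by rewrite /u; nra.
have v1 : v <= 1 by rewrite /v; nra.
have W2 : W ^+ 2 <= u * v.
  have := ler_pM (sqr_ge0 H) (sqr_ge0 H') HH HH'.
  by rewrite /W exprMn (_ : a * b * _ = u * v) // /u /v; ring.
have c2 : c ^+ 2 <= (H + H') ^+ 2 by rewrite ler_sqr // ?nnegrE // (le_trans c0 cH).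
have HH'2 : (H + H') ^+ 2 <= 1 - (u + v) + 2 * W.
  rewrite (_ : (H + H') ^+ 2 = H ^+ 2 + H' ^+ 2 + 2 * W); last by rewrite /W; ring.
  rewrite (_ : 1 - (u + v) + 2 * W = a * b + (1 - a) * (1 - b) + 2 * W); last first.
    by rewrite /u /v; ring.
  lra.
have W4 : 4 * W ^+ 2 <= (u + v) ^+ 2 by have := sqr_ge0 (u - v); nra.
have -> : (a - b) ^+ 2 = (u - v) ^+ 2 by rewrite /u /v; ring.
have h3 : u + v - 2 * W <= 1 - c ^+ 2 by lra.
have h4 : 0 <= u + v + 2 * W by nra.
have h5 : 0 <= u + v - 2 * W by nra.
have h6 : u + v + 2 * W <= 4 by nra.
have : (u - v) ^+ 2 <= (u + v - 2 * W) * (u + v + 2 * W) by nra.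
move/le_trans; apply.
have : (u + v - 2 * W) * (u + v + 2 * W) <= (1 - c ^+ 2) * (u + v + 2 * W).
  by rewrite ler_wpM2r.
nra.
Qed.

Section RadialMargin.
Variable R : realType.
Variable P : set (R * R) -> opmat R.
Hypothesis HP : is_POVM P.
Hypothesis Hcov : phase_covariant P.
Hypothesis Hcan : forall Th : set R, measurable Th -> Th `<=` Angles R ->
  forall m n, P (polar_set (Rplus R) Th) m n = Ecan Th m n.
Local Notation pos := (`]0, +oo[%classic : set R).
Local Notation origin := [set ((0 : R), (0 : R))].
Local Notation Re := (@complex.Re R).
Local Notation angle_arc := (@angle_arc R).
Local Notation arc_len := (@arc_len R).

Lemma pos_sub_Rplus (Z : set R) : Z `<=` pos -> Z `<=` Rplus R.
Proof. by move=> Zp x /Zp; rewrite /Rplus /= !in_itv /= !andbT => /ltW. Qed.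

Lemma measurable_pos_setD (Z : set R) : measurable Z -> measurable (pos `\` Z).
Proof. by move=> mZ; apply: measurableD => //; exact: measurable_itv. Qed.

Lemma pos_setD_sub (Z : set R) : pos `\` Z `<=` pos.
Proof. by move=> x []. Qed.

Lemma P_polar_arc_diag (Z : set R) k j m : measurable Z -> Z `<=` pos -> (j < k)%N ->
  P (polar_set Z (angle_arc k j)) m m = P (polar_set Z (angle_arc k 0)) m m.
Proof.
move=> mZ Zp jk; have k0 : (0 < k)%N by apply: leq_ltn_trans jk.
have := Hcov mZ (pos_sub_Rplus Zp) (measurable_itv _) (arc_sub_Angles k0)
  (j%:R * arc_len k) m m.
by rewrite expi_conj_diag shift_arc0.
Qed.

Lemma P_polar_Angles_diag (Z : set R) k m : (8 <= k)%N -> measurable Z -> Z `<=` pos ->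
  P (polar_set Z (Angles R)) m m = P (polar_set Z (angle_arc k 0)) m m *+ k.
Proof.
move=> k8 mZ Zp; have k0 : (0 < k)%N by apply: leq_trans k8.
rewrite (Angles_bigsetU_arc R k0) polar_set_bigsetU
  (povm_bigsetU HP (F := fun j => polar_set Z (angle_arc k j))) //.
- rewrite (eq_bigr (fun=> P (polar_set Z (angle_arc k 0)) m m)) ?sumr_const ?card_ord //.
  by move=> j _; exact: P_polar_arc_diag.
- by move=> j _; exact: measurable_polar_arc.
- move=> i j ik jk ij; apply: polar_set_disj => //; try exact: arc_sub_Angles.
  by right; exact: arc_disj.
Qed.

Lemma Ecan_arc0_split (Z : set R) k m n : (8 <= k)%N -> measurable Z -> Z `<=` pos ->
  Ecan (angle_arc k 0) m n = P origin m n +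
    (P (polar_set Z (angle_arc k 0)) m n + P (polar_set (pos `\` Z) (angle_arc k 0)) m n).
Proof.
move=> k8 mZ Zp; have k0 : (0 < k)%N by apply: leq_trans k8.
have Zp' := @pos_setD_sub Z.
have arc00 : angle_arc k 0 0.
  by rewrite arc0 /= in_itv /= lexx; have [/andP[]] := arc_len_bounds R k8.
have mS : measurable (angle_arc k 0) by exact: measurable_itv.
rewrite -(Hcan mS (arc_sub_Angles k0)) (polar_Rplus_split Zp arc00).
have mA := measurable_polar_arc 0 mZ Zp k8.
have mB := measurable_polar_arc 0 (measurable_pos_setD mZ) Zp' k8.
have AB0 : polar_set Z (angle_arc k 0) `&` polar_set (pos `\` Z) (angle_arc k 0) = set0.
  apply: polar_set_disj => //; try exact: arc_sub_Angles.
  by left; apply/seteqP; split => // x [Zx []].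
have OAB0 : origin `&` (polar_set Z (angle_arc k 0) `|` polar_set (pos `\` Z) (angle_arc k 0))
    = set0 by rewrite setIUr !origin_polar_disj // setU0.
have mO := @measurable_origin R.
by rewrite !(povm_setU HP) //; exact: measurableU.
Qed.

(* The origin carries no weight: it lies in every sector [R+ x [0, 2 pi / k)], of
   canonical-phase weight [1 / k]. *)
Lemma P_origin_diag m : P origin m m = 0.
Proof.
have [Im0 Re0] := psd_diag m (povm_psd HP (@measurable_origin R)).
apply: complex_ext => //=; apply: (natmul_bounded_eq0 (C := 1) (k0 := 8) Re0) => k k8.
have mpos : measurable pos by exact: measurable_itv.
have := f_equal Re (Ecan_arc0_split m m k8 mpos (@subset_refl _ pos)).
have [/andP[a0 _] _] := arc_len_bounds R k8.
rewrite arc0 Ecan_itv0_diag // !ReD -arc0.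
have [_ p0] := psd_diag m (povm_psd HP (measurable_polar_arc 0 mpos (@subset_refl _ pos) k8)).
have [_ p0'] := psd_diag m (povm_psd HP (measurable_polar_arc 0 (measurable_pos_setD mpos)
  (@pos_setD_sub pos) k8)).
have ak := arc_len_ratio R (leq_trans (isT : (0 < 8)%N) k8).
by have := @ler0n R k; nra.
Qed.

Lemma P_origin_resym m n : resym (P origin) m n = 0.
Proof.
have := psd_cauchy_schwarz m n (povm_psd HP (@measurable_origin R)).
rewrite !P_origin_diag /= mulr0 => h.
by apply/eqP; rewrite -sqrf_eq0 eq_le h sqr_ge0.
Qed.

Lemma arc0_compl_diag (Z : set R) k m : (8 <= k)%N -> measurable Z -> Z `<=` pos ->
  Re (P (polar_set (pos `\` Z) (angle_arc k 0)) m m) * k%:R =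
  1 - Re (P (polar_set Z (Angles R)) m m).
Proof.
move=> k8 mZ Zp; have [/andP[a0 _] _] := arc_len_bounds R k8.
have := f_equal Re (Ecan_arc0_split m m k8 mZ Zp).
rewrite P_origin_diag (P_polar_Angles_diag m k8 mZ Zp) ReMn -mulr_natr.
rewrite arc0 Ecan_itv0_diag // !ReD -arc0 add0r => e.
have ak := arc_len_ratio R (leq_trans (isT : (0 < 8)%N) k8).
by move: ak; rewrite e => ak; lra.
Qed.

Lemma arc0_resym_sum (Z : set R) k m : (8 <= k)%N -> measurable Z -> Z `<=` pos ->
  arc_len k * cos (arc_len k) / (2 * pi) <=
  resym (P (polar_set Z (angle_arc k 0))) m m.+1 +
  resym (P (polar_set (pos `\` Z) (angle_arc k 0))) m m.+1.
Proof.
move=> k8 mZ Zp; have [/andP[a0 api] a1] := arc_len_bounds R k8.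
have := @Ecan_itv0_resym R (arc_len k) m; rewrite -arc0.
have -> : resym (Ecan (angle_arc k 0)) m m.+1 = resym (P origin) m m.+1 +
    (resym (P (polar_set Z (angle_arc k 0))) m m.+1 +
     resym (P (polar_set (pos `\` Z) (angle_arc k 0))) m m.+1).
  by rewrite /resym !(Ecan_arc0_split _ _ k8 mZ Zp) !ReD; field.
rewrite P_origin_resym add0r; apply.
by rewrite a0 /=; have := pihalf_lt2 R; have := pi_gt0 R; lra.
Qed.

Lemma P_Angles_diag_gap (Z : set R) k m : (8 <= k)%N -> measurable Z -> Z `<=` pos ->
  (Re (P (polar_set Z (Angles R)) m m) - Re (P (polar_set Z (Angles R)) m.+1 m.+1)) ^+ 2
  <= 4 * (1 - cos (arc_len k) ^+ 2).
Proof.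
move=> k8 mZ Zp; have [/andP[a0 api] a1] := arc_len_bounds R k8.
have k0 : (0 : R) < k%:R by rewrite ltr0n (leq_trans _ k8).
have ak := arc_len_ratio R (leq_trans (isT : (0 < 8)%N) k8).
have mS := measurable_polar_arc 0 mZ Zp k8.
have mS' := measurable_polar_arc 0 (measurable_pos_setD mZ) (@pos_setD_sub Z) k8.
have [_ p0] := psd_diag m (povm_psd HP mS); have [_ q0] := psd_diag m.+1 (povm_psd HP mS).
have [_ p0'] := psd_diag m (povm_psd HP mS'); have [_ q0'] := psd_diag m.+1 (povm_psd HP mS').
have cs := psd_cauchy_schwarz m m.+1 (povm_psd HP mS).
have cs' := psd_cauchy_schwarz m m.+1 (povm_psd HP mS').
have ha := f_equal Re (P_polar_Angles_diag m k8 mZ Zp).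
have hb := f_equal Re (P_polar_Angles_diag m.+1 k8 mZ Zp).
rewrite ReMn -mulr_natr in ha; rewrite ReMn -mulr_natr in hb.
have ha' := arc0_compl_diag m k8 mZ Zp; have hb' := arc0_compl_diag m.+1 k8 mZ Zp.
have hsum := arc0_resym_sum m k8 mZ Zp.
have e : arc_len k * cos (arc_len k) / (2 * pi) * k%:R =
         cos (arc_len k) * (arc_len k / (2 * pi) * k%:R) by ring.
rewrite ak mulr1 in e; have := ler_wpM2r (ltW k0) hsum; rewrite e => hcos.
have := ler_wpM2l (sqr_ge0 (k%:R : R)) cs; have := ler_wpM2l (sqr_ge0 (k%:R : R)) cs'.
move: ha hb ha' hb' p0 q0 p0' q0' hcos.
set a := Re (P (polar_set Z (Angles R)) m m); set b := Re (P (polar_set Z (Angles R)) m.+1 m.+1).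
set h := resym _ m m.+1; set h' := resym _ m m.+1.
move=> ha hb ha' hb' p0 q0 p0' q0' hcos cs2' cs2.
apply: (complementary_blocks_gap (H := k%:R * h) (H' := k%:R * h')).
- by apply/andP; split; nra.
- by apply/andP; split; nra.
- by rewrite ha hb; lra.
- by rewrite -ha' -hb'; lra.
- by apply: cos_ge0_pihalf; apply/andP; split; lra.
- by lra.
Qed.

(* The gap is at most [4 sin^2 (2 pi / k) <= 4 (2 pi / k)^2] for every [k >= 8]. *)
Lemma P_Angles_diag_succ (Z : set R) m : measurable Z -> Z `<=` pos ->
  Re (P (polar_set Z (Angles R)) m m) = Re (P (polar_set Z (Angles R)) m.+1 m.+1).
Proof.
move=> mZ Zp; apply/eqP; rewrite -subr_eq0 -sqrf_eq0; apply/eqP.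
apply: (natmul_bounded_eq0 (C := 8 * pi) (k0 := 8) (sqr_ge0 _)) => k k8.
have [/andP[a0 api] a1] := arc_len_bounds R k8.
have k0 : (0 < k)%N := leq_trans (isT : (0 < 8)%N) k8.
have pi0 := pi_gt0 R.
have s0 : 0 <= sin (arc_len k) by apply: sin_ge0_pi; apply/andP; split; lra.
have s_le := sin_le_id (ltW a0); have sc := cos2Dsin2 (arc_len k).
have := P_Angles_diag_gap m k8 mZ Zp; set d := (_ - _) ^+ 2 => gap.
have gap' : d <= 4 * arc_len k ^+ 2 by nra.
have e : 4 * arc_len k ^+ 2 * k%:R = 4 * arc_len k * (2 * pi).
  by rewrite -(natr_arc_len R k0); ring.
have : d * k%:R <= 4 * arc_len k ^+ 2 * k%:R by rewrite ler_wpM2r.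
by rewrite e; nra.
Qed.

Lemma P_Angles_diag_const (Z : set R) n : measurable Z -> Z `<=` pos ->
  Re (P (polar_set Z (Angles R)) n n) = Re (P (polar_set Z (Angles R)) 0 0).
Proof. by move=> mZ Zp; elim: n => // n IH; rewrite -P_Angles_diag_succ. Qed.

(* Rotating by [pi / (m - n)] multiplies the [(m, n)] entry by [-1]. *)
Lemma P_Angles_offdiag (X : set R) m n : measurable X -> X `<=` Rplus R -> m != n ->
  P (polar_set X (Angles R)) m n = 0.
Proof.
move=> mX XR mn.
have := Hcov mX XR (measurable_itv _) (@subset_refl _ (Angles R)) (pi / (m%:R - n%:R)) m n.
rewrite shift_Angles; set w := P _ m n => ww.
have d0 : (m%:R - n%:R : R) != 0 by rewrite subr_eq0 eqr_nat.
have : expi (pi / (m%:R - n%:R) * m%:R) * w * expi (- (pi / (m%:R - n%:R) * n%:R))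
    = - w.
  by rewrite mulrAC expiD (_ : _ + _ = pi) ?expi_pi ?mulN1r //; field.
rewrite ww => /eqP; rewrite -addr_eq0 -mulr2n -mulr_natr mulf_eq0 pnatr_eq0 orbF.
by move/eqP.
Qed.

Lemma measurable_polar_Angles (Z : set R) : measurable Z -> Z `<=` pos ->
  measurable (polar_set Z (Angles R)).
Proof.
move=> mZ Zp; rewrite (Angles_bigsetU_arc R (isT : (0 < 8)%N)) polar_set_bigsetU.
by apply: bigsetU_measurable => j _; exact: measurable_polar_arc.
Qed.

Lemma measurable_polar_origin (X T : set R) : measurable (polar_set (X `&` [set 0]) T).
Proof. by case: (polar_set_origin X T) => ->; [exact: measurable0 | exact: measurable_origin]. Qed.

Lemma measurable_polar_Angles_Rplus (X : set R) : measurable X -> X `<=` Rplus R ->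
  measurable (polar_set X (Angles R)).
Proof.
move=> mX XR; rewrite (polar_set_split0 _ XR); apply: measurableU.
  exact: measurable_polar_origin.
apply: measurable_polar_Angles; last by move=> x [].
by apply: measurableI => //; exact: measurable_itv.
Qed.

Lemma P_Angles_diag_pos (X : set R) m : measurable X -> X `<=` Rplus R ->
  P (polar_set X (Angles R)) m m = P (polar_set (X `&` pos) (Angles R)) m m.
Proof.
move=> mX XR; have mXp : measurable (X `&` pos) by apply: measurableI => //; exact: measurable_itv.
rewrite {1}(polar_set_split0 _ XR) (povm_setU HP) //.
- by case: (polar_set_origin X (Angles R)) => ->;
    rewrite ?(povm_set0 HP) ?P_origin_diag add0r.
- exact: measurable_polar_origin.
- by apply: measurable_polar_Angles => // x [].
- case: (polar_set_origin X (Angles R)) => ->; first by rewrite set0I.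
  by apply: origin_polar_disj => x [].
Qed.

Lemma setIRplus_pos : Rplus R `&` pos = pos.
Proof.
apply/seteqP; split => [x []//|x px]; split => //.
exact: (pos_sub_Rplus (@subset_refl _ pos)).
Qed.

Lemma P_pos_Angles_total : Re (P (polar_set pos (Angles R)) 0 0) = 1.
Proof.
rewrite -setIRplus_pos -P_Angles_diag_pos //; last exact: measurable_itv.
rewrite (Hcan (measurable_itv _) (@subset_refl _ _)) /Angles Ecan_itv0_diag ?twopi_gt0 //.
by rewrite mulfV // gt_eqF // twopi_gt0.
Qed.

Definition radial_margin (A : set R) : \bar R :=
  if pselect (measurable A) then (Re (P (polar_set (A `&` pos) (Angles R)) 0 0))%:E
  else 0%E.

Lemma radial_margin0 : radial_margin set0 = 0%E.
Proof.
by rewrite /radial_margin; case: pselect => [mA|//]; rewrite set0I polar_set0l (povm_set0 HP).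
Qed.

Lemma radial_margin_ge0 A : (0 <= radial_margin A)%E.
Proof.
rewrite /radial_margin; case: pselect => // mA; rewrite lee_fin.
have mAp : measurable (A `&` pos) by apply: measurableI => //; exact: measurable_itv.
have Ap : A `&` pos `<=` pos by move=> x [].
by have [] := psd_diag 0 (povm_psd HP (measurable_polar_Angles mAp Ap)).
Qed.

Lemma radial_margin_sigma_additive : semi_sigma_additive radial_margin.
Proof.
move=> F mF tF mU.
have mFp i : measurable (F i `&` pos) by apply: measurableI => //; exact: measurable_itv.
pose G i := polar_set (F i `&` pos) (Angles R).
have mG i : measurable (G i) by apply: measurable_polar_Angles => // x [].
have tG : trivIset setT G.
  move=> i j _ _ GiGj; apply: tF => //; apply/set0P/negP => /eqP Fij.
  move/set0P/negP: GiGj; apply; apply/eqP.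
  apply: polar_set_disj; try exact: subset_refl; try by move=> x [].
  by left; rewrite setIACA Fij set0I.
have [ReG _] := (let: And3 _ _ h := HP in h) G mG tG 0%N 0%N.
rewrite /G -polar_set_bigcupl -setI_bigcupl in ReG.
rewrite /radial_margin; case: pselect => [mA|//].
rewrite (_ : (fun n => _) = fun n => (\sum_(i < n) Re (P (G i) 0 0))%:E).
  by apply: cvg_EFin; [near=> n | exact: ReG].
apply/funext => n; rewrite big_mkord -sumEFin; apply: eq_bigr => i _.
by rewrite /radial_margin; case: pselect => // /(_ (mF i)).
Unshelve. all: end_near.
Qed.

HB.instance Definition _ := isMeasure.Build _ _ _ radial_margin
  radial_margin0 radial_margin_ge0 radial_margin_sigma_additive.

Lemma radial_marginT : radial_margin setT = 1%E.
Proof.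
by rewrite /radial_margin; case: pselect => [mA|//]; rewrite setTI P_pos_Angles_total.
Qed.

HB.instance Definition _ := Measure_isProbability.Build _ _ _ radial_margin radial_marginT.

Definition radial_probability : probability R R :=
  Probability.clone _ _ _ radial_margin _.

Lemma radial_probability_Rplus : radial_probability (Rplus R) = 1%E.
Proof.
rewrite /= /radial_margin; case: pselect => [mA|]; last by case; exact: measurable_itv.
by rewrite setIRplus_pos P_pos_Angles_total.
Qed.

Lemma P_polar_Angles (X : set R) : measurable X -> X `<=` Rplus R ->
  forall m n, P (polar_set X (Angles R)) m n = cR (fine (radial_probability X)) * (m == n)%:R.
Proof.
move=> mX XR m n; have [<-|mn] := eqVneq m n; last first.
  by rewrite mulr0 P_Angles_offdiag.
rewrite mulr1 /= /radial_margin; case: pselect => // mX' /=.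
apply: complex_ext => /=.
  have mXp : measurable (X `&` pos) by apply: measurableI => //; exact: measurable_itv.
  have Xp : X `&` pos `<=` pos by move=> x [].
  by rewrite P_Angles_diag_pos // P_Angles_diag_const.
by have [] := psd_diag m (povm_psd HP (measurable_polar_Angles_Rplus mX XR)).
Qed.

End RadialMargin.

Theorem mainTheorem6 (R : realType) (P : set (R * R) -> opmat R) :
  is_POVM P -> phase_covariant P ->
  (forall Th : set R, measurable Th -> Th `<=` Angles R ->
     forall m n, P (polar_set (Rplus R) Th) m n = Ecan Th m n) ->
  exists nu : probability R R,
    nu (Rplus R) = 1%E /\
    forall X : set R, measurable X -> X `<=` Rplus R ->
      forall m n, P (polar_set X (Angles R)) m n =
                  cR (fine (nu X)) * ((m == n)%:R : Cplx R).
Proof.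
move=> HP Hcov Hcan; exists (radial_probability HP Hcan).
by split; [exact: radial_probability_Rplus | exact: P_polar_Angles].
Qed.
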